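(* Let $\mathcal{B}=(X,P,B)$ be an ordinal ballean. Then $\mathcal{B}$ is either metrizable or cellular.
   Context: A ball structure is a triple $\mathcal{B}=(X,P,B)$ where $X,P$ are non-empty sets and for all $x\in X$, $\alpha\in P$, $B(x,\alpha)\subseteq X$ with $x\in B(x,\alpha)$ (the ball of radius $\alpha$ around $x$). Put $B^*(x,\alpha)=\{y\in X: x\in B(y,\alpha)\}$ and $B(A,\alpha)=\bigcup_{a\in A}B(a,\alpha)$ for $A\subseteq X$. A ball structure is a ballean if (1) for all $\alpha,\beta\in P$ there are $\alpha',\beta'\in P$ with $B(x,\alpha)\subseteq B^*(x,\alpha')$ and $B^*(x,\beta)\subseteq B(x,\beta')$ for all $x\in X$; and (2) for all $\alpha,\beta\in P$ there is $\gamma\in P$ with $B(B(x,\alpha),\beta)\subseteq B(x,\gamma)$ for all $x\in X$. For balleans $\mathcal{B}_1=(X_1,P_1,B_1)$, $\mathcal{B}_2=(X_2,P_2,B_2)$, a map $f:X_1\to X_2$ is a $\prec$-mapping if for every $\alpha\in P_1$ there is $\beta\in P_2$ with $f(B_1(x,\alpha))\subseteq B_2(f(x),\beta)$ for all $x\in X_1$; a bijection $f$ is an asymorphism if $f$ and $f^{-1}$ are $\prec$-mappings, and then the balleans are asymorphic. Two balleans on the same set are identified ($\mathcal{B}_1=\mathcal{B}_2$) if the identity map is an asymorphism. A metric space $(X,d)$ gives the metric ballean $(X,\mathbb{R}^+,B_d)$ with $B_d(x,r)=\{y: d(x,y)\le r\}$; a ballean is metrizable if it is asymorphic to some metric ballean.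 A ballean is connected if for all $x,y\in X$ there is $\alpha\in P$ with $y\in B(x,\alpha)$. Preorder $P$ by $\alpha\le\beta$ iff $B(x,\alpha)\subseteq B(x,\beta)$ for all $x\in X$. A connected ballean is ordinal if $P$ has a cofinal subset (i.e. a subset $P'$ such that every $\alpha\in P$ is $\le$ some element of $P'$) which is well-ordered by $\le$. For $\alpha\in P$, points $x,y$ are $\alpha$-path connected if there are $x=x_0,x_1,\dots,x_n=y$ with $x_{i+1}\in B(x_i,\alpha)$ for all $i$; let $B^{\Box}(x,\alpha)=\{y: x,y \text{ are } \alpha\text{-path connected}\}$. The cellularization is $\mathcal{B}^{\Box}=(X,P,B^{\Box})$, and $\mathcal{B}$ is cellular if $\mathcal{B}^{\Box}=\mathcal{B}$ (i.e. the identity map is an asymorphism between them). *)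

From Stdlib Require Import Reals Relations.
Open Scope R_scope.

Section Balleans.

(* A ball structure on X with radii P: [B x a y] means  y \in B(x, a). *)

Definition is_ball_structure {X P : Type} (B : X -> P -> X -> Prop) : Prop :=
  inhabited X /\ inhabited P /\ (forall (x : X) (a : P), B x a x).

Definition Bstar {X P : Type} (B : X -> P -> X -> Prop) (x : X) (a : P) (y : X) : Prop :=
  B y a x.

Definition Bset {X P : Type} (B : X -> P -> X -> Prop) (A : X -> Prop) (a : P) (y : X) : Prop :=
  exists z, A z /\ B z a y.

Definition is_ballean {X P : Type} (B : X -> P -> X -> Prop) : Prop :=
  is_ball_structure B /\
  (forall a b : P, exists a' b' : P, forall x : X,
      (forall y, B x a y -> Bstar B x a' y) /\
      (forall y, Bstar B x b y -> B x b' y)) /\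
  (forall a b : P, exists c : P, forall x : X,
      forall y, Bset B (B x a) b y -> B x c y).

Definition prec_mapping {X1 P1 X2 P2 : Type}
  (B1 : X1 -> P1 -> X1 -> Prop) (B2 : X2 -> P2 -> X2 -> Prop) (f : X1 -> X2) : Prop :=
  forall a : P1, exists b : P2, forall x y : X1, B1 x a y -> B2 (f x) b (f y).

Definition asymorphism {X1 P1 X2 P2 : Type}
  (B1 : X1 -> P1 -> X1 -> Prop) (B2 : X2 -> P2 -> X2 -> Prop) (f : X1 -> X2) : Prop :=
  exists g : X2 -> X1,
    (forall x, g (f x) = x) /\ (forall y, f (g y) = y) /\
    prec_mapping B1 B2 f /\ prec_mapping B2 B1 g.

Definition same_ballean {X P1 P2 : Type}
  (B1 : X -> P1 -> X -> Prop) (B2 : X -> P2 -> X -> Prop) : Prop :=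
  asymorphism B1 B2 (fun x => x).

Definition is_metric {Y : Type} (d : Y -> Y -> R) : Prop :=
  (forall x y, 0 <= d x y) /\
  (forall x y, d x y = 0 <-> x = y) /\
  (forall x y, d x y = d y x) /\
  (forall x y z, d x z <= d x y + d y z).

Definition nnreal : Type := { r : R | 0 <= r }.

Definition metric_ball {Y : Type} (d : Y -> Y -> R) (x : Y) (r : nnreal) (y : Y) : Prop :=
  d x y <= proj1_sig r.

Definition metrizable {X P : Type} (B : X -> P -> X -> Prop) : Prop :=
  exists (Y : Type) (d : Y -> Y -> R), is_metric d /\
    exists f : X -> Y, asymorphism B (metric_ball d) f.

Definition connected_ballean {X P : Type} (B : X -> P -> X -> Prop) : Prop :=
  forall x y : X, exists a : P, B x a y.

Definition rad_le {X P : Type} (B : X -> P -> X -> Prop) (a b : P) : Prop :=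
  forall x y, B x a y -> B x b y.

Definition well_ordered_by {P : Type} (le : P -> P -> Prop) (Q : P -> Prop) : Prop :=
  (forall a b, Q a -> Q b -> le a b \/ le b a) /\
  (forall a b, Q a -> Q b -> le a b -> le b a -> a = b) /\
  (forall a b c, Q a -> Q b -> Q c -> le a b -> le b c -> le a c) /\
  (forall a, Q a -> le a a) /\
  (forall S : P -> Prop, (forall a, S a -> Q a) -> (exists a, S a) ->
      exists m, S m /\ forall s, S s -> le m s).

Definition ordinal_ballean {X P : Type} (B : X -> P -> X -> Prop) : Prop :=
  connected_ballean B /\
  exists Q : P -> Prop,
    (forall a : P, exists b, Q b /\ rad_le B a b) /\
    well_ordered_by (rad_le B) Q.

(* alpha-path connectedness: a chain x = x0, ..., xn = y with x_{i+1} \in B(x_i, a) *)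
Definition Bbox {X P : Type} (B : X -> P -> X -> Prop) (x : X) (a : P) (y : X) : Prop :=
  clos_refl_trans_1n X (fun u v => B u a v) x y.

Definition cellular {X P : Type} (B : X -> P -> X -> Prop) : Prop :=
  same_ballean (Bbox B) B.

End Balleans.

(** If some countable family of radii is cofinal, weighting a step through the
    [k]-th radius by [k + 1] and taking least total weight of chains gives an
    integer-valued metric whose balls are exactly the balls of the ballean.
    Otherwise the cofinal chain of radii (only its totality matters) forces
    every countable family of radii to have an upper bound; in particular the
    radii needed for [a]-paths of length [n], [n] ranging over the naturals,
    are all dominated by one radius, which is then a radius for the
    cellularization at [a]. *)

From Stdlib Require Import Reals Relations.
From Stdlib Require Import Classical ClassicalEpsilon Lia Wf_nat.
Local Open Scope nat_scope.

Lemma countable_cofinal_or_countably_bounded {P : Type}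
    {le : P -> P -> Prop} {Q : P -> Prop} :
  (forall a b c, le a b -> le b c -> le a c) ->
  (forall a, exists b, Q b /\ le a b) ->
  (forall a b, Q a -> Q b -> le a b \/ le b a) ->
  (exists f : nat -> P, forall a, exists n, le a (f n)) \/
  (forall g : nat -> P, exists b, forall n, le (g n) b).
Proof.
  intros le_trans cofinal total.
  destruct (classic (exists f : nat -> P, forall a, exists n, le a (f n)))
    as [countable | not_countable]; [left; exact countable | right].
  intros g.
  destruct (choice (fun a b => Q b /\ le a b) cofinal) as [q Hq].
  assert (q_g_not_cofinal : exists b, forall n, ~ le b (q (g n))).
  { apply not_all_not_ex; intros all_below.
    apply not_countable; exists (fun n => q (g n)); intros a.
    apply not_all_not_ex, all_below. }
  destruct q_g_not_cofinal as [b Hb].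
  exists (q b); intros n.
  destruct (Hq (g n)) as [Qqgn le_gn]; destruct (Hq b) as [Qqb le_b].
  destruct (total _ _ Qqgn Qqb) as [le_qgn | le_qb].
  - exact (le_trans _ _ _ le_gn le_qgn).
  - exfalso; exact (Hb n (le_trans _ _ _ le_b le_qb)).
Qed.

Definition sym_ball {X P : Type} (B : X -> P -> X -> Prop) (a : P) (x y : X) : Prop :=
  B x a y \/ B y a x.

Section BalleanFacts.

Context {X P : Type} {B : X -> P -> X -> Prop}.
Hypothesis ballean_B : is_ballean B.

Lemma ballean_refl x a : B x a x.
Proof. apply ballean_B. Qed.

Lemma ballean_inv b : exists b', forall x y, B y b x -> B x b' y.
Proof.
  destruct ballean_B as [_ [sym _]].
  destruct (sym b b) as [a' [b' Hb']]; exists b'.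
  intros x y; apply (proj2 (Hb' x)).
Qed.

Lemma ballean_comp a b : exists c, forall x y z, B x a y -> B y b z -> B x c z.
Proof.
  destruct ballean_B as [_ [_ comp]].
  destruct (comp a b) as [c Hc]; exists c.
  intros x y z Hxy Hyz; apply Hc; exists y; split; assumption.
Qed.

Lemma ballean_join a b : exists c, rad_le B a c /\ rad_le B b c.
Proof.
  destruct (ballean_comp a b) as [c Hc]; exists c; split; intros x y H.
  - exact (Hc x y y H (ballean_refl y b)).
  - exact (Hc x x y (ballean_refl x a) H).
Qed.

Lemma ballean_sym_ball a : exists e, forall x y, sym_ball B a x y -> B x e y.
Proof.
  destruct (ballean_inv a) as [a' Ha'].
  destruct (ballean_join a a') as [e [Hle Hle']]; exists e.
  intros x y [H | H]; [exact (Hle x y H) | exact (Hle' x y (Ha' x y H))].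
Qed.

End BalleanFacts.

Section Cellular.

Context {X P : Type} (B : X -> P -> X -> Prop).
Hypothesis ballean_B : is_ballean B.

Fixpoint ball_iter (a : P) (n : nat) : X -> X -> Prop :=
  match n with
  | 0 => fun x z => x = z
  | S n => fun x z => exists y, B x a y /\ ball_iter a n y z
  end.

Lemma Bbox_ball_iter {x a y} : Bbox B x a y -> exists n, ball_iter a n x y.
Proof.
  induction 1 as [x | x y z Hxy _ [n Hn]].
  - exists 0; reflexivity.
  - exists (S n); exists y; split; assumption.
Qed.

Lemma ball_iter_bounded a n : exists c, forall x y, ball_iter a n x y -> B x c y.
Proof.
  induction n as [| n [c Hc]].
  - exists a; intros x y ->; apply (ballean_refl ballean_B).
  - destruct (ballean_comp ballean_B a c) as [c' Hc']; exists c'.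
    intros x z [y [Hxy Hyz]]; exact (Hc' x y z Hxy (Hc y z Hyz)).
Qed.

Lemma cellular_of_countably_bounded :
  (forall g : nat -> P, exists b, forall n, rad_le B (g n) b) -> cellular B.
Proof.
  intros countably_bounded.
  exists (fun x => x); split; [reflexivity | split; [reflexivity | split]].
  - intros a.
    destruct (choice _ (ball_iter_bounded a)) as [g Hg].
    destruct (countably_bounded g) as [b Hb]; exists b.
    intros x y Hxy; destruct (Bbox_ball_iter Hxy) as [n Hn].
    exact (Hb n x y (Hg n x y Hn)).
  - intros a; exists a; intros x y Hxy.
    econstructor; [exact Hxy | constructor].
Qed.

End Cellular.

Section Metrizable.

Context {X P : Type} (B : X -> P -> X -> Prop) (f : nat -> P).
Hypothesis ballean_B : is_ballean B.
Hypothesis connected_B : connected_ballean B.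
Hypothesis f_cofinal : forall a, exists n, rad_le B a (f n).

Inductive weighted_chain : X -> X -> nat -> Prop :=
  | wchain_nil x : weighted_chain x x 0
  | wchain_cons k x y z n :
      sym_ball B (f k) x y -> weighted_chain y z n -> weighted_chain x z (S k + n).
Arguments wchain_cons {k x y z n}.

Lemma weighted_chain_app {x y z m n} :
  weighted_chain x y m -> weighted_chain y z n -> weighted_chain x z (m + n).
Proof.
  induction 1 as [| k x y' y m Hstep _ IH]; intros Hyz; [exact Hyz |].
  rewrite <- Nat.add_assoc; exact (wchain_cons Hstep (IH Hyz)).
Qed.

Lemma weighted_chain_step {k x y} : sym_ball B (f k) x y -> weighted_chain x y (S k).
Proof.
  intros Hstep; rewrite <- (Nat.add_0_r (S k)); exact (wchain_cons Hstep (wchain_nil y)).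
Qed.

Lemma weighted_chain_rev x y n : weighted_chain x y n -> weighted_chain y x n.
Proof.
  induction 1 as [x | k x y z n Hstep _ IH]; [constructor |].
  rewrite Nat.add_comm; apply (weighted_chain_app IH), weighted_chain_step.
  destruct Hstep as [H | H]; [right | left]; exact H.
Qed.

Lemma weighted_chain_0 {x y} : weighted_chain x y 0 -> x = y.
Proof. inversion 1; reflexivity. Qed.

Lemma weighted_chain_of_ball {x y a} : B x a y -> exists k, weighted_chain x y (S k).
Proof.
  intros Hxy; destruct (f_cofinal a) as [k Hk]; exists k.
  apply weighted_chain_step; left; exact (Hk x y Hxy).
Qed.

Lemma sym_ball_bounded n :
  exists e, forall k x y, k <= n -> sym_ball B (f k) x y -> B x e y.
Proof.
  induction n as [| n [e He]].
  - destruct (ballean_sym_ball ballean_B (f 0)) as [e He]; exists e.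
    intros k x y Hk; replace k with 0 by lia; apply He.
  - destruct (ballean_sym_ball ballean_B (f (S n))) as [e' He'].
    destruct (ballean_join ballean_B e e') as [e'' [Hle Hle']]; exists e''.
    intros k x y Hk Hstep; destruct (Nat.eq_dec k (S n)) as [-> | Hne].
    + exact (Hle' x y (He' x y Hstep)).
    + apply Hle, (He k); [lia | exact Hstep].
Qed.

Lemma weighted_chain_bounded n :
  exists c, forall x y m, weighted_chain x y m -> m <= n -> B x c y.
Proof.
  induction n as [| n [c Hc]].
  - exists (f 0); intros x y m Hm Hm0.
    replace m with 0 in Hm by lia.
    rewrite (weighted_chain_0 Hm); apply (ballean_refl ballean_B).
  - destruct (sym_ball_bounded n) as [e He].
    destruct (ballean_comp ballean_B e c) as [c' Hc']; exists c'.
    intros x z m Hm Hmn; destruct Hm as [x | k x y z m Hstep Hm].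
    + apply (ballean_refl ballean_B).
    + apply (Hc' x y z); [apply (He k); [lia | exact Hstep] |].
      apply (Hc y z m Hm); lia.
Qed.

Definition chain_dist (x y : X) : nat :=
  epsilon (inhabits 0)
    (fun n => weighted_chain x y n /\ forall m, weighted_chain x y m -> n <= m).

Lemma chain_dist_spec x y :
  weighted_chain x y (chain_dist x y) /\
  forall m, weighted_chain x y m -> chain_dist x y <= m.
Proof.
  unfold chain_dist; apply epsilon_spec.
  destruct (connected_B x y) as [a Ha]; destruct (weighted_chain_of_ball Ha) as [k Hk].
  destruct (dec_inh_nat_subset_has_unique_least_element (weighted_chain x y)
              (fun n => classic _) (ex_intro _ _ Hk)) as [n [Hn _]].
  exists n; exact Hn.
Qed.

Lemma chain_dist_chain x y : weighted_chain x y (chain_dist x y).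
Proof. apply chain_dist_spec. Qed.

Lemma chain_dist_le x y m : weighted_chain x y m -> chain_dist x y <= m.
Proof. apply chain_dist_spec. Qed.

Lemma chain_dist_is_metric : is_metric (fun x y => INR (chain_dist x y)).
Proof.
  split; [intros; apply pos_INR |].
  split; [| split].
  - intros x y; split.
    + intros H0; apply weighted_chain_0.
      replace 0 with (chain_dist x y) by (apply INR_eq; exact H0).
      apply chain_dist_chain.
    + intros ->; replace (chain_dist y y) with 0; [reflexivity |].
      symmetry; apply Nat.le_0_r, chain_dist_le; constructor.
  - intros x y; f_equal; apply Nat.le_antisymm;
      apply chain_dist_le, weighted_chain_rev, chain_dist_chain.
  - intros x y z; rewrite <- plus_INR; apply le_INR, chain_dist_le.
    exact (weighted_chain_app (chain_dist_chain x y) (chain_dist_chain y z)).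
Qed.

Lemma metrizable_of_countable_cofinal : metrizable B.
Proof.
  exists X, (fun x y => INR (chain_dist x y)); split; [exact chain_dist_is_metric |].
  exists (fun x => x), (fun x => x); split; [reflexivity | split; [reflexivity | split]].
  - intros a; destruct (f_cofinal a) as [k Hk].
    exists (exist _ (INR (S k)) (pos_INR _)); intros x y Hxy.
    apply le_INR, chain_dist_le, weighted_chain_step; left; exact (Hk x y Hxy).
  - intros [r r_ge0]; destruct (INR_unbounded r) as [n Hn].
    destruct (weighted_chain_bounded n) as [c Hc]; exists c; intros x y Hxy.
    apply (Hc x y (chain_dist x y) (chain_dist_chain x y)), Nat.lt_le_incl, INR_lt.
    exact (Rle_lt_trans _ _ _ Hxy Hn).
Qed.

End Metrizable.

Theorem theorem1 (X P : Type) (B : X -> P -> X -> Prop) :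
  is_ballean B -> ordinal_ballean B -> metrizable B \/ cellular B.
Proof.
  intros ballean_B [connected_B [Q [Q_cofinal [Q_total _]]]].
  assert (rad_le_trans : forall a b c, rad_le B a b -> rad_le B b c -> rad_le B a c)
    by (intros a b c Hab Hbc x y H; exact (Hbc x y (Hab x y H))).
  destruct (countable_cofinal_or_countably_bounded rad_le_trans Q_cofinal Q_total)
    as [[f f_cofinal] | countably_bounded].
  - left; exact (metrizable_of_countable_cofinal _ _ ballean_B connected_B f_cofinal).
  - right; exact (cellular_of_countably_bounded _ ballean_B countably_bounded).
Qed.
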